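(* Let $\mathcal H$ be a real Hilbert space of finite dimension $d$ with orthonormal basis $(e_\ell)_{0\leq\ell\leq d-1}$, let $G\in\mathcal L(\mathcal S(\mathcal H),\mathcal A(\mathcal H))$ be diagonalizable in this basis with matrix-eigenvalue $(g_{i,j})$, let $H_0\in\mathcal S(\mathcal H)$ and let $H$ be the solution of $H'=[H,G(H)]$, $H(0)=H_0$. Assume that $H(t)$ converges as $t\to+\infty$ to a diagonal operator $H_\infty=\mathrm{diag}(\alpha_\ell)_{0\leq\ell\leq d-1}$ (as is the case under the assumptions of Corollary 1.4 above), and that $$-\gamma:=\max_{0\leq i<j\leq d-1}g_{i,j}(\alpha_i-\alpha_j)<0.$$ Then there exist $T,C>0$ such that for all $t\geq T$, $$\|H(t)-\mathrm{diag}(H(t))\|_{\mathsf{HS}}\leq Ce^{-\gamma t},$$ where $\mathrm{diag}(H)$ denotes the diagonal part of $H$ in the basis $(e_\ell)$.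
   Context: $\mathcal S(\mathcal H)$, $\mathcal A(\mathcal H)$ are the symmetric and skew-symmetric operators; $\|\cdot\|_{\mathsf{HS}}$ is the Hilbert-Schmidt (Frobenius) norm; $[A,B]=AB-BA$. With $e_j^*(x)=\langle x,e_j\rangle$, define $E_{i,j}=\frac1{\sqrt2}(e_j^*(\cdot)e_i+e_i^*(\cdot)e_j)$ for $i\neq j$, $E_{i,i}=e_i^*(\cdot)e_i$, $E^\pm_{i,j}=\frac1{\sqrt2}(e_j^*(\cdot)e_i-e_i^*(\cdot)e_j)$. $G$ is diagonalizable with matrix-eigenvalue $(g_{i,j})$ (a skew-symmetric real family) if $G(E_{i,j})=g_{i,j}E^\pm_{i,j}$ for all $i,j$. *)

From Stdlib Require Import Reals Lra List.
Open Scope R_scope.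

(* Operators on H (dim d, orthonormal basis e_0..e_{d-1}) are represented by
   their matrices in that basis: A i j = <A e_j, e_i>. Only indices < d matter. *)
Definition Mat := nat -> nat -> R.

Definition fsum (d : nat) (f : nat -> R) : R :=
  fold_right Rplus 0 (map f (seq 0 d)).

Definition meq (d : nat) (A B : Mat) : Prop :=
  forall i j, (i < d)%nat -> (j < d)%nat -> A i j = B i j.

Definition madd (A B : Mat) : Mat := fun i j => A i j + B i j.
Definition mscale (c : R) (A : Mat) : Mat := fun i j => c * A i j.
Definition mmul (d : nat) (A B : Mat) : Mat :=
  fun i j => fsum d (fun k => A i k * B k j).
Definition comm (d : nat) (A B : Mat) : Mat :=
  fun i j => mmul d A B i j - mmul d B A i j.

Definition symmetric (d : nat) (A : Mat) : Prop :=
  forall i j, (i < d)%nat -> (j < d)%nat -> A i j = A j i.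

Definition ind (a b : nat) : R := if Nat.eqb a b then 1 else 0.

Definition Esym (i j : nat) : Mat := fun k l =>
  if Nat.eqb i j then ind k i * ind l i
  else / sqrt 2 * (ind k i * ind l j + ind k j * ind l i).
Definition Eskew (i j : nat) : Mat := fun k l =>
  / sqrt 2 * (ind k i * ind l j - ind k j * ind l i).

Definition diagonalizable (d : nat) (G : Mat -> Mat) (g : nat -> nat -> R) : Prop :=
  (forall A B, meq d A B -> meq d (G A) (G B)) /\
  (forall A B, symmetric d A -> symmetric d B -> meq d (G (madd A B)) (madd (G A) (G B))) /\
  (forall c A, symmetric d A -> meq d (G (mscale c A)) (mscale c (G A))) /\
  (forall i j, (i < d)%nat -> (j < d)%nat -> g i j = - g j i) /\
  (forall i j, (i < d)%nat -> (j < d)%nat -> meq d (G (Esym i j)) (mscale (g i j) (Eskew i j))).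

Definition HSnorm (d : nat) (A : Mat) : R :=
  sqrt (fsum d (fun i => fsum d (fun j => (A i j) ^ 2))).

Definition offdiag (A : Mat) : Mat := fun i j => if Nat.eqb i j then 0 else A i j.

(* Because [G] acts entrywise, [(G A)_{kl} = g_{kl} A_{kl}], the off-diagonal part [X] of
   [H] obeys [X_ij' = g_ij (H_ii - H_jj) X_ij + (terms quadratic in X)], while
   [H_ii' = O(|X|^2)].  Near the limit the linear coefficient is at most [-gamma + eps],
   so [V = |X|^2] satisfies [V' <= -gamma V] and decays like [exp (-gamma t)].  Then the
   diagonal converges at the same rate, and feeding both rates back into the equation
   for [V] gives [V' <= (-2 gamma + O(exp (-gamma t / 2))) V], whence
   [V = O(exp (-2 gamma t))] by Gronwall's lemma. *)
From Pilot Require Import Defs.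
From Stdlib Require Import Reals.
Open Scope R_scope.
From Stdlib Require Import Lra Lia List.
(* [Reals] exports an unrelated [ind]; restore the one of [Defs]. *)
Import Defs.

(** * Finite sums *)

Lemma fold_right_Rplus_init (l : list R) (a : R) :
  fold_right Rplus a l = fold_right Rplus 0 l + a.
Proof. induction l as [|b l IH]; simpl; [lra | rewrite IH; lra]. Qed.

Lemma fsum_S d f : fsum (S d) f = fsum d f + f d.
Proof.
  unfold fsum. rewrite seq_S, map_app, fold_right_app. simpl.
  rewrite fold_right_Rplus_init. lra.
Qed.

Lemma fsum_ext d f g : (forall i, (i < d)%nat -> f i = g i) -> fsum d f = fsum d g.
Proof.
  induction d as [|d IH]; intros Hfg; [reflexivity|].
  rewrite !fsum_S, IH, Hfg; [reflexivity | lia | intros; apply Hfg; lia].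
Qed.

Lemma fsum_plus d f g : fsum d (fun i => f i + g i) = fsum d f + fsum d g.
Proof. induction d as [|d IH]; [cbn; lra|]. rewrite !fsum_S, IH. lra. Qed.

Lemma fsum_minus d f g : fsum d (fun i => f i - g i) = fsum d f - fsum d g.
Proof. induction d as [|d IH]; [cbn; lra|]. rewrite !fsum_S, IH. lra. Qed.

Lemma fsum_scale d c f : fsum d (fun i => c * f i) = c * fsum d f.
Proof. induction d as [|d IH]; [cbn; lra|]. rewrite !fsum_S, IH. lra. Qed.

Lemma fsum_const d c : fsum d (fun _ => c) = INR d * c.
Proof. induction d as [|d IH]; [cbn; lra|]. rewrite fsum_S, IH, S_INR. lra. Qed.

Lemma fsum_le d f g : (forall i, (i < d)%nat -> f i <= g i) -> fsum d f <= fsum d g.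
Proof.
  induction d as [|d IH]; intros Hfg; [cbn; lra|].
  rewrite !fsum_S. apply Rplus_le_compat; [apply IH; intros; apply Hfg|apply Hfg]; lia.
Qed.

Lemma fsum_nonneg d f : (forall i, (i < d)%nat -> 0 <= f i) -> 0 <= fsum d f.
Proof.
  intros Hf. rewrite <- (Rmult_0_r (INR d)), <- fsum_const. now apply fsum_le.
Qed.

Lemma fsum_elem_le d f k :
  (forall i, (i < d)%nat -> 0 <= f i) -> (k < d)%nat -> f k <= fsum d f.
Proof.
  induction d as [|d IH]; intros Hf Hk; [lia|]. rewrite fsum_S.
  destruct (Nat.eq_dec k d) as [->|Hne].
  - assert (0 <= fsum d f) by (apply fsum_nonneg; intros; apply Hf; lia). lra.
  - assert (f k <= fsum d f) by (apply IH; [intros; apply Hf|]; lia).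
    assert (0 <= f d) by (apply Hf; lia). lra.
Qed.

Lemma fsum_swap d e f :
  fsum d (fun i => fsum e (fun j => f i j)) = fsum e (fun j => fsum d (fun i => f i j)).
Proof.
  induction d as [|d IH].
  - rewrite (fsum_ext e _ (fun _ => 0)), fsum_const by reflexivity. cbn; lra.
  - rewrite fsum_S, IH, <- fsum_plus. apply fsum_ext; intros. now rewrite fsum_S.
Qed.

Lemma fsum_abs d f : Rabs (fsum d f) <= fsum d (fun i => Rabs (f i)).
Proof.
  induction d as [|d IH]; [cbn; rewrite Rabs_R0; lra|].
  rewrite !fsum_S. eapply Rle_trans; [apply Rabs_triang|]. lra.
Qed.

Lemma ind_refl k : ind k k = 1.
Proof. unfold ind; now rewrite Nat.eqb_refl. Qed.

Lemma ind_neq k i : k <> i -> ind k i = 0.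
Proof. intros Hki; unfold ind; apply Nat.eqb_neq in Hki; now rewrite Hki. Qed.

Lemma fsum_ind_l d k f : (k < d)%nat -> fsum d (fun i => ind k i * f i) = f k.
Proof.
  induction d as [|d IH]; intros Hk; [lia|]. rewrite fsum_S.
  destruct (Nat.eq_dec k d) as [->|Hne].
  - rewrite ind_refl, (fsum_ext _ _ (fun _ => 0)), fsum_const; [lra|].
    intros i Hi. rewrite ind_neq by lia. lra.
  - rewrite IH, ind_neq by lia. lra.
Qed.

Lemma fsum2_ind d k l F : (k < d)%nat -> (l < d)%nat ->
  fsum d (fun i => fsum d (fun j => F i j * (ind k i * ind l j))) = F k l.
Proof.
  intros Hk Hl.
  rewrite (fsum_ext d _ (fun i => ind k i * fsum d (fun j => ind l j * F i j))).
  - rewrite fsum_ind_l by exact Hk. now apply fsum_ind_l.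
  - intros i _. rewrite <- fsum_scale. apply fsum_ext; intros; ring.
Qed.

Lemma derivable_pt_lim_fsum d (f : nat -> R -> R) (f' : nat -> R) t :
  (forall i, (i < d)%nat -> derivable_pt_lim (f i) t (f' i)) ->
  derivable_pt_lim (fun s => fsum d (fun i => f i s)) t (fsum d f').
Proof.
  induction d as [|d IH]; intros Hf; [apply derivable_pt_lim_const|].
  rewrite fsum_S.
  apply (derivable_pt_lim_ext (fun s => fsum d (fun i => f i s) + f d s));
    [intros; now rewrite fsum_S|].
  apply (derivable_pt_lim_plus (fun s => fsum d (fun i => f i s)) (f d));
    [apply IH; intros; apply Hf | apply Hf]; lia.
Qed.

Lemma exists_abs_le_bound d (g : nat -> nat -> R) :
  exists kappa, 0 <= kappa /\ forall i j, (i < d)%nat -> (j < d)%nat -> Rabs (g i j) <= kappa.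
Proof.
  exists (fsum d (fun i => fsum d (fun j => Rabs (g i j)))).
  assert (Hrow : forall i, 0 <= fsum d (fun j => Rabs (g i j)))
    by (intros; apply fsum_nonneg; intros; apply Rabs_pos).
  split; [now apply fsum_nonneg|]. intros i j Hi Hj.
  eapply Rle_trans; [|apply (fsum_elem_le _ _ i); auto].
  apply (fsum_elem_le _ (fun j => Rabs (g i j))); auto. intros; apply Rabs_pos.
Qed.

(** * Calculus on the half-line *)

Lemma derivable_pt_lim_exp_comp f l t :
  derivable_pt_lim f t l -> derivable_pt_lim (fun s => exp (f s)) t (l * exp (f t)).
Proof.
  intros Hf. rewrite Rmult_comm.
  exact (derivable_pt_lim_comp f exp t l (exp (f t)) Hf (derivable_pt_lim_exp (f t))).
Qed.

Lemma derivable_pt_lim_exp_scal c t :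
  derivable_pt_lim (fun s => exp (c * s)) t (c * exp (c * t)).
Proof.
  apply derivable_pt_lim_exp_comp.
  apply (derivable_pt_lim_ext (fun s => c * id s)); [reflexivity|].
  pose proof (derivable_pt_lim_scal id c t 1 (derivable_pt_lim_id t)) as Hlin.
  now rewrite Rmult_1_r in Hlin.
Qed.

Lemma exp_le_exp_of_le a b : a <= b -> exp a <= exp b.
Proof.
  intros Hab. destruct (Rle_lt_or_eq_dec a b Hab) as [Hlt | ->];
    [left; now apply exp_increasing | lra].
Qed.

Lemma sqrt_exp x : sqrt (exp x) = exp (x / 2).
Proof.
  rewrite <- (sqrt_square (exp (x / 2))) by (left; apply exp_pos).
  rewrite <- exp_plus. f_equal. f_equal. field.
Qed.

Lemma nonincreasing_of_deriv_nonpos f f' a b : a <= b ->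
  (forall c, a <= c <= b -> derivable_pt_lim f c (f' c)) ->
  (forall c, a <= c <= b -> f' c <= 0) -> f b <= f a.
Proof.
  intros Hab Hd Hneg. destruct (Rle_lt_or_eq_dec a b Hab) as [Hlt | <-]; [|lra].
  destruct (MVT_cor2 f f' a b Hlt Hd) as [c [Hfc Hc]].
  assert (f' c <= 0) by (apply Hneg; lra). nra.
Qed.

Lemma eventually_forall_lt (P : nat -> R -> Prop) n :
  (forall j, (j < n)%nat -> exists T, forall t, T <= t -> P j t) ->
  exists T, forall t, T <= t -> forall j, (j < n)%nat -> P j t.
Proof.
  induction n as [|n IH]; intros HP; [exists 0; intros; lia|].
  destruct IH as [T1 H1]; [intros; apply HP; lia|].
  destruct (HP n) as [T2 H2]; [lia|].
  exists (Rmax T1 T2). intros t Ht j Hj. pose proof (Rmax_l T1 T2). pose proof (Rmax_r T1 T2).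
  destruct (Nat.eq_dec j n) as [-> | Hne]; [apply H2; lra | apply H1; [lra | lia]].
Qed.

(* Gronwall with the integrating factor [exp (c s + A / beta * exp (- beta s))], which
   is at least [exp (c s)] and has logarithmic derivative [c - A exp (- beta s)]. *)
Lemma exp_decay_of_deriv_le (V V' : R -> R) a c A beta : 0 < beta -> 0 <= A ->
  (forall t, a <= t -> 0 <= V t) ->
  (forall t, a <= t -> derivable_pt_lim V t (V' t)) ->
  (forall t, a <= t -> V' t <= (- c + A * exp (- beta * t)) * V t) ->
  exists N, 0 <= N /\ forall t, a <= t -> V t <= N * exp (- c * t).
Proof.
  intros Hbeta HA Hpos Hd Hle.
  set (u := fun s => c * s + A / beta * exp (- beta * s)).
  set (u' := fun s => c - A * exp (- beta * s)).
  assert (Hu : forall s, derivable_pt_lim u s (u' s)).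
  { intros s. unfold u, u'.
    replace (c - A * exp (- beta * s)) with (c * 1 + A / beta * (- beta * exp (- beta * s)))
      by (field; lra).
    apply (derivable_pt_lim_plus (fun s => c * id s) (fun s => A / beta * exp (- beta * s))).
    - apply derivable_pt_lim_scal, derivable_pt_lim_id.
    - apply (derivable_pt_lim_scal (fun s => exp (- beta * s))), derivable_pt_lim_exp_scal. }
  exists (V a * exp (u a)). split; [apply Rmult_le_pos; [apply Hpos; lra | left; apply exp_pos]|].
  intros t Ht.
  assert (Hmono : V t * exp (u t) <= V a * exp (u a)).
  { apply (nonincreasing_of_deriv_nonpos (fun s => V s * exp (u s))
      (fun s => V' s * exp (u s) + V s * (u' s * exp (u s)))); [lra| |].
    - intros s Hs. apply (derivable_pt_lim_mult V (fun s => exp (u s))).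
      + apply Hd; lra.
      + apply derivable_pt_lim_exp_comp, Hu.
    - intros s Hs. pose proof (Hle s ltac:(lra)). pose proof (Hpos s ltac:(lra)).
      pose proof (exp_pos (u s)). unfold u' in *. nra. }
  assert (Hut : c * t <= u t).
  { unfold u. pose proof (exp_pos (- beta * t)).
    assert (0 <= A / beta) by (apply Rle_mult_inv_pos; lra). nra. }
  replace (V t) with (V t * exp (c * t) * exp (- c * t))
    by (rewrite Rmult_assoc, <- exp_plus;
        replace (c * t + - c * t) with 0 by ring; rewrite exp_0; ring).
  apply Rmult_le_compat_r; [left; apply exp_pos|].
  eapply Rle_trans; [|exact Hmono].
  apply Rmult_le_compat_l; [apply Hpos; lra | now apply exp_le_exp_of_le].
Qed.

Lemma limit_le_add_exp (f f' : R -> R) L a B gamma : 0 <= B ->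
  (forall s, a <= s -> derivable_pt_lim f s (f' s)) ->
  (forall s, a <= s -> f' s <= B * gamma * exp (- gamma * s)) ->
  (forall eps, 0 < eps -> exists T, forall s, T <= s -> Rabs (f s - L) < eps) ->
  forall t, a <= t -> L <= f t + B * exp (- gamma * t).
Proof.
  intros HB Hd Hf' Hlim t Ht.
  set (phi := fun s => f s + B * exp (- gamma * s)).
  assert (Hphi : forall s, t <= s -> phi s <= phi t).
  { intros s Hs. apply (nonincreasing_of_deriv_nonpos phi
      (fun s => f' s + B * (- gamma * exp (- gamma * s)))); [lra| |].
    - intros c Hc. apply (derivable_pt_lim_plus f (fun s => B * exp (- gamma * s))).
      + apply Hd; lra.
      + apply (derivable_pt_lim_scal (fun s => exp (- gamma * s))), derivable_pt_lim_exp_scal.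
    - intros c Hc. pose proof (Hf' c ltac:(lra)). lra. }
  destruct (Rle_lt_dec L (phi t)) as [Hle | Hlt]; [exact Hle|].
  destruct (Hlim (L - phi t)) as [T HT]; [lra|].
  set (s := Rmax T t). pose proof (HT s (Rmax_l T t)) as Hclose.
  pose proof (Hphi s (Rmax_r T t)). apply Rabs_def2 in Hclose.
  assert (0 <= B * exp (- gamma * s)) by (apply Rmult_le_pos; [lra | left; apply exp_pos]).
  unfold phi in *. lra.
Qed.

Lemma abs_sub_limit_le_exp (f f' : R -> R) L a B gamma : 0 <= B ->
  (forall s, a <= s -> derivable_pt_lim f s (f' s)) ->
  (forall s, a <= s -> Rabs (f' s) <= B * gamma * exp (- gamma * s)) ->
  (forall eps, 0 < eps -> exists T, forall s, T <= s -> Rabs (f s - L) < eps) ->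
  forall t, a <= t -> Rabs (f t - L) <= B * exp (- gamma * t).
Proof.
  intros HB Hd Hf' Hlim t Ht. apply Rabs_le. set (b := B * exp (- gamma * t)). split.
  - enough (L <= f t + b) by lra.
    apply (limit_le_add_exp f f' L a B gamma HB Hd); trivial.
    intros s Hs. pose proof (Hf' s Hs). pose proof (Rle_abs (f' s)). lra.
  - pose proof (limit_le_add_exp (fun s => - f s) (fun s => - f' s) (- L) a B gamma HB)
      as Hneg.
    enough (- L <= - f t + b) by lra.
    apply Hneg; trivial.
    + intros s Hs. apply (derivable_pt_lim_opp f), Hd, Hs.
    + intros s Hs. pose proof (Hf' s Hs). pose proof (Rle_abs (- f' s)).
      rewrite Rabs_Ropp in *. lra.
    + intros eps Heps. destruct (Hlim eps Heps) as [T HT]. exists T. intros s Hs.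
      replace (- f s - - L) with (- (f s - L)) by ring. rewrite Rabs_Ropp. now apply HT.
Qed.

(** * The squared Hilbert-Schmidt norm *)

Definition sqnorm (d : nat) (A : Mat) : R := fsum d (fun i => fsum d (fun j => A i j ^ 2)).

Definition sqnorm_deriv (d : nat) (A B : Mat) : R :=
  fsum d (fun i => fsum d (fun j => 2 * A i j * B i j)).

Lemma sqnorm_nonneg d A : 0 <= sqnorm d A.
Proof. apply fsum_nonneg; intros; apply fsum_nonneg; intros; apply pow2_ge_0. Qed.

Lemma sq_entry_le_sqnorm d A i j : (i < d)%nat -> (j < d)%nat -> A i j ^ 2 <= sqnorm d A.
Proof.
  intros Hi Hj. eapply Rle_trans; [|apply (fsum_elem_le _ _ i); trivial].
  - apply (fsum_elem_le _ (fun j => A i j ^ 2)); trivial. intros; apply pow2_ge_0.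
  - intros; apply fsum_nonneg; intros; apply pow2_ge_0.
Qed.

Lemma abs_entry_le_sqrt_sqnorm d A i j :
  (i < d)%nat -> (j < d)%nat -> Rabs (A i j) <= sqrt (sqnorm d A).
Proof.
  intros Hi Hj. rewrite <- sqrt_Rsqr_abs. apply sqrt_le_1_alt.
  pose proof (sq_entry_le_sqnorm d A i j Hi Hj). unfold Rsqr. simpl in *. lra.
Qed.

Lemma sqrt_sqnorm_le d A b : 0 <= b ->
  (forall i j, (i < d)%nat -> (j < d)%nat -> Rabs (A i j) <= b) ->
  sqrt (sqnorm d A) <= INR d * b.
Proof.
  intros Hb HA. rewrite <- (sqrt_pow2 (INR d * b)) by (apply Rmult_le_pos; [apply pos_INR|lra]).
  apply sqrt_le_1_alt. apply Rle_trans with (fsum d (fun _ => fsum d (fun _ => b ^ 2))).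
  - apply fsum_le; intros i Hi; apply fsum_le; intros j Hj.
    rewrite <- (pow2_abs (A i j)). pose proof (HA i j Hi Hj). pose proof (Rabs_pos (A i j)). nra.
  - rewrite fsum_const, fsum_const. right; ring.
Qed.

Lemma offdiag_diag A i : offdiag A i i = 0.
Proof. unfold offdiag. now rewrite Nat.eqb_refl. Qed.

Lemma offdiag_neq A i j : i <> j -> offdiag A i j = A i j.
Proof. intros Hij. unfold offdiag. apply Nat.eqb_neq in Hij. now rewrite Hij. Qed.

Lemma derivable_pt_lim_sqnorm d (M : R -> Mat) (M' : Mat) t :
  (forall i j, (i < d)%nat -> (j < d)%nat -> derivable_pt_lim (fun s => M s i j) t (M' i j)) ->
  derivable_pt_lim (fun s => sqnorm d (M s)) t (sqnorm_deriv d (M t) M').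
Proof.
  intros HM. unfold sqnorm, sqnorm_deriv.
  apply (derivable_pt_lim_fsum d (fun i s => fsum d (fun j => M s i j ^ 2))); intros i Hi.
  apply (derivable_pt_lim_fsum d (fun j s => M s i j ^ 2)); intros j Hj.
  apply (derivable_pt_lim_ext (fun s => M s i j * M s i j)); [intros; ring|].
  replace (2 * M t i j * M' i j) with (M' i j * M t i j + M t i j * M' i j) by ring.
  apply (derivable_pt_lim_mult (fun s => M s i j) (fun s => M s i j)); now apply HM.
Qed.

Lemma derivable_pt_lim_offdiag (M : R -> Mat) (M' : Mat) t i j :
  derivable_pt_lim (fun s => M s i j) t (M' i j) ->
  derivable_pt_lim (fun s => offdiag (M s) i j) t (offdiag M' i j).
Proof.
  intros HM. unfold offdiag. destruct (Nat.eqb i j); [apply derivable_pt_lim_const | exact HM].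
Qed.

Lemma two_mul_abs_le_sq_add x y : 2 * Rabs (x * y) <= x ^ 2 + y ^ 2.
Proof.
  rewrite Rabs_mult, <- (pow2_abs x), <- (pow2_abs y).
  pose proof (pow2_ge_0 (Rabs x - Rabs y)). nra.
Qed.

Lemma mul3_le_sq_add a x y c m k : Rabs a <= m -> Rabs c <= 2 * k ->
  a * (x * y * c) <= k * m * (x ^ 2 + y ^ 2).
Proof.
  intros Ha Hc. pose proof (two_mul_abs_le_sq_add x y).
  pose proof (Rabs_pos a). pose proof (Rabs_pos c). pose proof (Rabs_pos (x * y)).
  apply Rle_trans with (Rabs a * Rabs c * Rabs (x * y)).
  - rewrite <- !Rabs_mult. replace (a * (x * y * c)) with (a * c * (x * y)) by ring. apply Rle_abs.
  - assert (0 <= m * k) by (apply Rmult_le_pos; lra).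
    apply Rle_trans with (m * (2 * k) * Rabs (x * y)); [|nra].
    apply Rmult_le_compat_r; [lra|]. apply Rmult_le_compat; lra.
Qed.

(** * The entrywise action of [G] *)

Definition mzero : Mat := fun _ _ => 0.

Definition msum (l : list nat) (F : nat -> Mat) : Mat :=
  fold_right (fun i acc => madd (F i) acc) mzero l.

Lemma msum_seq_entry d F k l : msum (seq 0 d) F k l = fsum d (fun i => F i k l).
Proof.
  unfold fsum. induction (seq 0 d) as [|a s IH]; [reflexivity|]. cbn. now rewrite <- IH.
Qed.

Lemma symmetric_msum d l F :
  (forall i, In i l -> symmetric d (F i)) -> symmetric d (msum l F).
Proof.
  induction l as [|a l IH]; intros HF k m Hk Hm; [reflexivity|].
  change (msum (a :: l) F) with (madd (F a) (msum l F)). unfold madd.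
  rewrite (HF a (or_introl eq_refl)), IH by (auto; intros; apply HF; now right). reflexivity.
Qed.

Lemma symmetric_Esym d i j : symmetric d (Esym i j).
Proof. intros k l _ _. unfold Esym. destruct (Nat.eqb i j); ring. Qed.

Lemma symmetric_mscale d c A : symmetric d A -> symmetric d (mscale c A).
Proof. intros HA k l Hk Hl; unfold mscale; now rewrite HA. Qed.

Lemma inv_sqrt2_sq : / sqrt 2 * / sqrt 2 = / 2.
Proof. rewrite <- Rinv_mult, sqrt_sqrt; lra. Qed.

(* The expansion of a symmetric [A] on the basis [E_{i,j}] is summed over all ordered
   pairs, which counts each off-diagonal [E_{i,j}] twice: its coefficient
   [sqrt 2 * A i j] is therefore split into two halves [A i j / sqrt 2]. *)
Definition Esym_part (A : Mat) (i j : nat) : Mat :=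
  mscale (if Nat.eqb i j then A i i else A i j / sqrt 2) (Esym i j).

Lemma Esym_part_entry A i j k l :
  Esym_part A i j k l = A i j / 2 * (ind k i * ind l j) + A i j / 2 * (ind k j * ind l i).
Proof.
  unfold Esym_part, mscale, Esym. destruct (Nat.eqb i j) eqn:Eij.
  - apply Nat.eqb_eq in Eij; subst. field.
  - unfold Rdiv. rewrite <- inv_sqrt2_sq. ring.
Qed.

Lemma msum_Esym_part d A : symmetric d A ->
  meq d A (msum (seq 0 d) (fun i => msum (seq 0 d) (fun j => Esym_part A i j))).
Proof.
  intros HA k l Hk Hl. rewrite msum_seq_entry.
  rewrite (fsum_ext d _ (fun i => fsum d (fun j => A i j / 2 * (ind k i * ind l j)) +
                                   fsum d (fun j => A i j / 2 * (ind l i * ind k j)))).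
  - rewrite fsum_plus, !fsum2_ind, (HA l k) by assumption. field.
  - intros i _. rewrite msum_seq_entry, <- fsum_plus. apply fsum_ext; intros j _.
    rewrite Esym_part_entry. ring.
Qed.

Section Entrywise.
Variables (d : nat) (G : Mat -> Mat) (g : nat -> nat -> R).
Hypothesis hG : diagonalizable d G g.

Lemma G_meq A B : meq d A B -> meq d (G A) (G B).
Proof. apply hG. Qed.

Lemma G_madd A B : symmetric d A -> symmetric d B -> meq d (G (madd A B)) (madd (G A) (G B)).
Proof. apply hG. Qed.

Lemma G_mscale c A : symmetric d A -> meq d (G (mscale c A)) (mscale c (G A)).
Proof. apply hG. Qed.

Lemma g_antisym i j : (i < d)%nat -> (j < d)%nat -> g i j = - g j i.
Proof. apply hG. Qed.

Lemma G_Esym i j : (i < d)%nat -> (j < d)%nat -> meq d (G (Esym i j)) (mscale (g i j) (Eskew i j)).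
Proof. apply hG. Qed.

Lemma g_diag i : (i < d)%nat -> g i i = 0.
Proof. intros Hi. pose proof (g_antisym i i Hi Hi). lra. Qed.

Lemma G_mzero : meq d (G mzero) mzero.
Proof.
  intros k m Hk Hm.
  assert (E : meq d mzero (mscale 0 mzero)) by (intros i j _ _; unfold mzero, mscale; ring).
  rewrite (G_meq _ _ E), G_mscale by (auto; intros i j _ _; reflexivity).
  unfold mscale, mzero; ring.
Qed.

Lemma G_msum l F : (forall i, In i l -> symmetric d (F i)) ->
  meq d (G (msum l F)) (msum l (fun i => G (F i))).
Proof.
  induction l as [|a l IH]; intros HF k m Hk Hm; [now apply G_mzero|].
  change (msum (a :: l) ?F) with (madd (F a) (msum l F)).
  rewrite G_madd; auto.
  - unfold madd. rewrite IH; auto. intros; apply HF; now right.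
  - apply HF; now left.
  - apply symmetric_msum. intros; apply HF; now right.
Qed.

Lemma G_Esym_part_entry A i j k l :
  (i < d)%nat -> (j < d)%nat -> (k < d)%nat -> (l < d)%nat ->
  G (Esym_part A i j) k l
  = g i j * A i j / 2 * (ind k i * ind l j) - g i j * A i j / 2 * (ind k j * ind l i).
Proof.
  intros Hi Hj Hk Hl. unfold Esym_part.
  rewrite (G_mscale _ _ (symmetric_Esym d i j)) by assumption. unfold mscale.
  rewrite G_Esym by assumption. unfold mscale, Eskew. destruct (Nat.eqb i j) eqn:Eij.
  - apply Nat.eqb_eq in Eij; subst. rewrite g_diag by assumption. ring.
  - unfold Rdiv. rewrite <- inv_sqrt2_sq. ring.
Qed.

Lemma G_entry A k l : symmetric d A -> (k < d)%nat -> (l < d)%nat -> G A k l = g k l * A k l.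
Proof.
  intros HA Hk Hl.
  assert (Hrow : forall i, symmetric d (msum (seq 0 d) (fun j => Esym_part A i j))).
  { intros i. apply symmetric_msum. intros; apply symmetric_mscale, symmetric_Esym. }
  rewrite (G_meq _ _ (msum_Esym_part d A HA)), G_msum, msum_seq_entry
    by (auto; intros; apply Hrow).
  rewrite (fsum_ext d _ (fun i => fsum d (fun j => g i j * A i j / 2 * (ind k i * ind l j)) -
                                   fsum d (fun j => g i j * A i j / 2 * (ind l i * ind k j)))).
  - rewrite fsum_minus, !fsum2_ind, (HA l k), (g_antisym l k) by assumption. field.
  - intros i Hi. rewrite G_msum, msum_seq_entry, <- fsum_minus
      by (auto; intros; apply symmetric_mscale, symmetric_Esym).
    apply fsum_ext; intros j Hj. rewrite G_Esym_part_entry by assumption. ring.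
Qed.

Lemma comm_G_entry A i j : symmetric d A -> (i < d)%nat -> (j < d)%nat ->
  comm d A (G A) i j = fsum d (fun k => A i k * A k j * (g k j - g i k)).
Proof.
  intros HA Hi Hj. unfold comm, mmul. rewrite <- fsum_minus. apply fsum_ext; intros k Hk.
  rewrite !(G_entry A) by assumption. ring.
Qed.

Lemma comm_G_offdiag A i j : symmetric d A -> (i < d)%nat -> (j < d)%nat -> i <> j ->
  comm d A (G A) i j = g i j * (A i i - A j j) * offdiag A i j
    + fsum d (fun k => offdiag A i k * offdiag A k j * (g k j - g i k)).
Proof.
  intros HA Hi Hj Hij. rewrite comm_G_entry by assumption.
  rewrite (fsum_ext d _ (fun k => offdiag A i k * offdiag A k j * (g k j - g i k) +
     (ind i k * (A i i * A i j * (g i j - g i i)) + ind j k * (A i j * A j j * (g j j - g i j))))).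
  - rewrite !fsum_plus, !fsum_ind_l by assumption.
    rewrite offdiag_neq, !g_diag by assumption. ring.
  - intros k Hk. destruct (Nat.eq_dec k i) as [->|Hki]; [|destruct (Nat.eq_dec k j) as [->|Hkj]].
    + rewrite ind_refl, ind_neq, offdiag_diag by lia. ring.
    + rewrite ind_refl, ind_neq, offdiag_diag by lia. ring.
    + rewrite !ind_neq, !offdiag_neq by lia. ring.
Qed.

Lemma comm_G_diag A i : symmetric d A -> (i < d)%nat ->
  comm d A (G A) i i = fsum d (fun k => offdiag A i k ^ 2 * (g k i - g i k)).
Proof.
  intros HA Hi. rewrite comm_G_entry by assumption. apply fsum_ext; intros k Hk.
  destruct (Nat.eq_dec k i) as [->|Hki].
  - ring.
  - rewrite offdiag_neq, (HA k i) by lia. ring.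
Qed.

Variables (alpha : nat -> R) (gamma kappa : R).
Hypothesis g_le : forall i j, (i < d)%nat -> (j < d)%nat -> Rabs (g i j) <= kappa.
Hypothesis gap_le : forall i j, (i < j)%nat -> (j < d)%nat ->
  g i j * (alpha i - alpha j) <= - gamma.

Lemma abs_g_sub_le i j k : (i < d)%nat -> (j < d)%nat -> (k < d)%nat ->
  Rabs (g k j - g i k) <= 2 * kappa.
Proof.
  intros Hi Hj Hk. eapply Rle_trans; [apply Rabs_triang|]. rewrite Rabs_Ropp.
  pose proof (g_le k j Hk Hj). pose proof (g_le i k Hi Hk). lra.
Qed.

Lemma gap_le_neq i j : (i < d)%nat -> (j < d)%nat -> i <> j ->
  g i j * (alpha i - alpha j) <= - gamma.
Proof.
  intros Hi Hj Hij. destruct (Nat.lt_ge_cases i j).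
  - now apply gap_le.
  - rewrite (g_antisym i j) by assumption.
    replace (- g j i * (alpha i - alpha j)) with (g j i * (alpha j - alpha i)) by ring.
    apply gap_le; lia.
Qed.

Lemma abs_comm_G_diag_le A i : symmetric d A -> (i < d)%nat ->
  Rabs (comm d A (G A) i i) <= 2 * kappa * sqnorm d (offdiag A).
Proof.
  intros HA Hi. rewrite comm_G_diag by assumption.
  eapply Rle_trans; [apply fsum_abs|].
  apply Rle_trans with (2 * kappa * fsum d (fun k => offdiag A i k ^ 2)).
  - rewrite <- fsum_scale. apply fsum_le; intros k Hk.
    rewrite Rabs_mult, (Rabs_right (_ ^ 2)) by (apply Rle_ge, pow2_ge_0).
    pose proof (abs_g_sub_le i i k Hi Hi Hk). pose proof (pow2_ge_0 (offdiag A i k)). nra.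
  - assert (0 <= kappa) by (pose proof (g_le i i Hi Hi); pose proof (Rabs_pos (g i i)); lra).
    apply Rmult_le_compat_l; [lra|].
    apply (fsum_elem_le d (fun i => fsum d (fun j => offdiag A i j ^ 2))); trivial.
    intros; apply fsum_nonneg; intros; apply pow2_ge_0.
Qed.

(* The linear part of the off-diagonal dynamics contracts at rate [gamma] up to the
   distance [e] of the diagonal to its limit; the quadratic part is absorbed by
   [sqrt (sqnorm d (offdiag A))]. *)
Lemma offdiag_comm_G_term_le A e i j : symmetric d A -> (i < d)%nat -> (j < d)%nat ->
  (forall k, (k < d)%nat -> Rabs (A k k - alpha k) <= e) ->
  offdiag A i j * offdiag (comm d A (G A)) i j
  <= (- gamma + 2 * kappa * e) * offdiag A i j ^ 2
     + fsum d (fun k => kappa * sqrt (sqnorm d (offdiag A))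
                         * (offdiag A i k ^ 2 + offdiag A k j ^ 2)).
Proof.
  intros HA Hi Hj He.
  assert (Hkappa : 0 <= kappa) by (pose proof (g_le i i Hi Hi); pose proof (Rabs_pos (g i i)); lra).
  destruct (Nat.eq_dec i j) as [<-|Hij].
  - rewrite !offdiag_diag.
    enough (0 <= fsum d (fun k => kappa * sqrt (sqnorm d (offdiag A))
                                  * (offdiag A i k ^ 2 + offdiag A k i ^ 2))) by lra.
    apply fsum_nonneg; intros k _.
    apply Rmult_le_pos; [apply Rmult_le_pos; [lra | apply sqrt_pos]|].
    pose proof (pow2_ge_0 (offdiag A i k)); pose proof (pow2_ge_0 (offdiag A k i)); lra.
  - rewrite (offdiag_neq (comm d A (G A))), comm_G_offdiag by assumption.
    set (x := offdiag A).
    rewrite Rmult_plus_distr_l. apply Rplus_le_compat.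
    + assert (Hlin : g i j * (A i i - A j j) <= - gamma + 2 * kappa * e).
      { replace (g i j * (A i i - A j j)) with
          (g i j * (alpha i - alpha j) + g i j * ((A i i - alpha i) - (A j j - alpha j))) by ring.
        pose proof (gap_le_neq i j Hi Hj Hij).
        enough (g i j * ((A i i - alpha i) - (A j j - alpha j)) <= kappa * (2 * e)) by lra.
        eapply Rle_trans; [apply Rle_abs|]. rewrite Rabs_mult.
        apply Rmult_le_compat; try apply Rabs_pos; [now apply g_le|].
        eapply Rle_trans; [apply Rabs_triang|]. rewrite Rabs_Ropp.
        pose proof (He i Hi). pose proof (He j Hj). lra. }
      pose proof (pow2_ge_0 (x i j)). nra.
    + rewrite <- fsum_scale. apply fsum_le; intros k Hk.
      apply mul3_le_sq_add; [apply abs_entry_le_sqrt_sqnorm | apply abs_g_sub_le]; assumption.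
Qed.

Lemma sqnorm_deriv_offdiag_comm_G_le A e : symmetric d A ->
  (forall k, (k < d)%nat -> Rabs (A k k - alpha k) <= e) ->
  sqnorm_deriv d (offdiag A) (offdiag (comm d A (G A)))
  <= 2 * (- gamma + 2 * kappa * (e + INR d * sqrt (sqnorm d (offdiag A))))
       * sqnorm d (offdiag A).
Proof.
  intros HA He. set (x := offdiag A). set (V := sqnorm d x). set (r := sqrt V).
  assert (Hrows : fsum d (fun i => fsum d (fun j => fsum d (fun k => x i k ^ 2))) = INR d * V).
  { unfold V, sqnorm. rewrite <- fsum_scale. apply fsum_ext; intros. apply fsum_const. }
  assert (Hcols : fsum d (fun i => fsum d (fun j => fsum d (fun k => x k j ^ 2))) = INR d * V).
  { rewrite (fsum_ext d _ (fun _ => V)), fsum_const; [reflexivity|].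
    intros i _. unfold V, sqnorm. apply fsum_swap. }
  unfold sqnorm_deriv. apply Rle_trans with (fsum d (fun i => fsum d (fun j =>
     2 * ((- gamma + 2 * kappa * e) * x i j ^ 2)
     + 2 * kappa * r * (fsum d (fun k => x i k ^ 2) + fsum d (fun k => x k j ^ 2))))).
  - apply fsum_le; intros i Hi; apply fsum_le; intros j Hj.
    pose proof (offdiag_comm_G_term_le A e i j HA Hi Hj He) as Hterm. fold x V r in Hterm.
    rewrite fsum_scale, fsum_plus in Hterm. lra.
  - rewrite (fsum_ext d _ (fun i => 2 * (- gamma + 2 * kappa * e) * fsum d (fun j => x i j ^ 2)
        + 2 * kappa * r * (fsum d (fun j => fsum d (fun k => x i k ^ 2))
                           + fsum d (fun j => fsum d (fun k => x k j ^ 2))))).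
    + rewrite fsum_plus, !fsum_scale, fsum_plus, Hrows, Hcols. right. unfold V, sqnorm. ring.
    + intros i _. rewrite <- !fsum_scale, <- fsum_plus, <- fsum_scale, <- fsum_plus.
      apply fsum_ext; intros; ring.
Qed.
End Entrywise.

(** * The flow *)

Section Flow.
Variables (d : nat) (G : Mat -> Mat) (g : nat -> nat -> R) (H : R -> Mat)
  (alpha : nat -> R) (gamma kappa : R).
Hypothesis hG : diagonalizable d G g.
Hypothesis g_le : forall i j, (i < d)%nat -> (j < d)%nat -> Rabs (g i j) <= kappa.
Hypothesis kappa_ge0 : 0 <= kappa.
Hypothesis gap_le : forall i j, (i < j)%nat -> (j < d)%nat ->
  g i j * (alpha i - alpha j) <= - gamma.
Hypothesis gamma_gt0 : 0 < gamma.
Hypothesis hsym : forall t, 0 <= t -> symmetric d (H t).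
Hypothesis hode : forall t, 0 < t -> forall i j, (i < d)%nat -> (j < d)%nat ->
  derivable_pt_lim (fun s => H s i j) t (comm d (H t) (G (H t)) i j).
Hypothesis hconv : forall i j, (i < d)%nat -> (j < d)%nat ->
  forall eps, 0 < eps -> exists T, forall t, T <= t ->
    Rabs (H t i j - (if Nat.eqb i j then alpha i else 0)) < eps.

Definition offdiag_energy (t : R) : R := sqnorm d (offdiag (H t)).

Definition offdiag_energy_deriv (t : R) : R :=
  sqnorm_deriv d (offdiag (H t)) (offdiag (comm d (H t) (G (H t)))).

Lemma offdiag_energy_nonneg t : 0 <= offdiag_energy t.
Proof. apply sqnorm_nonneg. Qed.

Lemma derivable_offdiag_energy t : 0 < t ->
  derivable_pt_lim offdiag_energy t (offdiag_energy_deriv t).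
Proof.
  intros Ht. apply derivable_pt_lim_sqnorm; intros i j Hi Hj.
  apply derivable_pt_lim_offdiag, hode; assumption.
Qed.

Lemma offdiag_energy_deriv_le t e : 0 <= t ->
  (forall k, (k < d)%nat -> Rabs (H t k k - alpha k) <= e) ->
  offdiag_energy_deriv t
  <= 2 * (- gamma + 2 * kappa * (e + INR d * sqrt (offdiag_energy t))) * offdiag_energy t.
Proof. intros Ht He. apply (sqnorm_deriv_offdiag_comm_G_le d G g hG alpha); auto. Qed.

Lemma eventually_near_limit eps : 0 < eps -> exists T, forall t, T <= t ->
  forall i, (i < d)%nat -> forall j, (j < d)%nat ->
  Rabs (H t i j - (if Nat.eqb i j then alpha i else 0)) < eps.
Proof.
  intros Heps.
  apply (eventually_forall_lt (fun i t => forall j, (j < d)%nat ->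
    Rabs (H t i j - (if Nat.eqb i j then alpha i else 0)) < eps)); intros i Hi.
  apply (eventually_forall_lt (fun j t =>
    Rabs (H t i j - (if Nat.eqb i j then alpha i else 0)) < eps)); intros j Hj.
  now apply hconv.
Qed.

(* Once every entry is within [eta] of its limit, the energy inequality reads
   [V' <= - gamma V]. *)
Lemma offdiag_energy_exp_decay : exists T0 M, 1 <= T0 /\ 0 <= M /\
  forall t, T0 <= t -> offdiag_energy t <= M * exp (- gamma * t).
Proof.
  pose proof (pos_INR d) as Hd.
  set (K := kappa * (1 + INR d * INR d)).
  assert (HK : 0 <= K) by (unfold K; apply Rmult_le_pos; nra).
  set (eta := gamma / (4 * (K + 1))).
  assert (Heta : 0 < eta) by (unfold eta; apply Rdiv_lt_0_compat; lra).
  assert (Hgamma : 4 * (K + 1) * eta = gamma) by (unfold eta; field; lra).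
  destruct (eventually_near_limit eta Heta) as [T HT].
  pose proof (Rmax_l T 1). pose proof (Rmax_r T 1). set (T0 := Rmax T 1) in *.
  assert (Hrate : forall t, T0 <= t ->
    offdiag_energy_deriv t <= (- gamma + 0 * exp (- 1 * t)) * offdiag_energy t).
  { intros t Ht.
    assert (Hdiag : forall k, (k < d)%nat -> Rabs (H t k k - alpha k) <= eta).
    { intros k Hk. pose proof (HT t ltac:(lra) k Hk k Hk) as Hclose.
      rewrite Nat.eqb_refl in Hclose. lra. }
    assert (Hoff : sqrt (offdiag_energy t) <= INR d * eta).
    { apply sqrt_sqnorm_le; [lra|]. intros i j Hi Hj. unfold offdiag.
      pose proof (HT t ltac:(lra) i Hi j Hj) as Hclose.
      destruct (Nat.eqb i j); [rewrite Rabs_R0 | rewrite Rminus_0_r in Hclose]; lra. }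
    eapply Rle_trans; [apply offdiag_energy_deriv_le; [lra | exact Hdiag]|].
    apply Rmult_le_compat_r; [apply offdiag_energy_nonneg|].
    assert (kappa * (INR d * sqrt (offdiag_energy t)) <= kappa * (INR d * (INR d * eta)))
      by (apply Rmult_le_compat_l; [|apply Rmult_le_compat_l]; assumption).
    assert (kappa * (eta + INR d * (INR d * eta)) = K * eta) by (unfold K; ring).
    nra. }
  destruct (exp_decay_of_deriv_le offdiag_energy offdiag_energy_deriv T0 gamma 0 1
      ltac:(lra) ltac:(lra)) as [M [HM HV]].
  - intros; apply offdiag_energy_nonneg.
  - intros t Ht. apply derivable_offdiag_energy. lra.
  - exact Hrate.
  - now exists T0, M.
Qed.

(* The diagonal moves at speed [O(offdiag_energy)], which is integrable at rate [gamma]. *)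
Lemma diag_exp_conv T0 M : 1 <= T0 -> 0 <= M ->
  (forall t, T0 <= t -> offdiag_energy t <= M * exp (- gamma * t)) ->
  forall t, T0 <= t -> forall i, (i < d)%nat ->
  Rabs (H t i i - alpha i) <= 2 * kappa * M / gamma * exp (- gamma * t).
Proof.
  intros HT0 HM HV t Ht i Hi.
  apply (abs_sub_limit_le_exp (fun s => H s i i) (fun s => comm d (H s) (G (H s)) i i)
    (alpha i) T0); trivial.
  - apply Rle_mult_inv_pos; nra.
  - intros s Hs. apply hode; [lra | assumption | assumption].
  - intros s Hs. replace (2 * kappa * M / gamma * gamma) with (2 * kappa * M) by (field; lra).
    eapply Rle_trans;
      [apply (abs_comm_G_diag_le d G g hG kappa g_le); [apply hsym; lra | assumption]|].
    rewrite (Rmult_assoc (2 * kappa)). apply Rmult_le_compat_l; [lra | now apply HV].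
  - intros eps Heps. destruct (hconv i i Hi Hi eps Heps) as [T HT].
    exists T. intros s Hs. pose proof (HT s Hs) as Hclose. now rewrite Nat.eqb_refl in Hclose.
Qed.

(* Both error terms of the energy inequality now decay at rate [gamma / 2]. *)
Lemma offdiag_energy_deriv_le_exp T0 M : 1 <= T0 -> 0 <= M ->
  (forall t, T0 <= t -> offdiag_energy t <= M * exp (- gamma * t)) ->
  forall t, T0 <= t ->
  offdiag_energy_deriv t
  <= (- (2 * gamma) + 4 * kappa * (2 * kappa * M / gamma + INR d * sqrt M)
                      * exp (- (gamma / 2) * t)) * offdiag_energy t.
Proof.
  intros HT0 HM HV t Ht.
  pose proof (diag_exp_conv T0 M HT0 HM HV t Ht) as Hdiag.
  set (c := 2 * kappa * M / gamma) in *.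
  assert (Hc : 0 <= c) by (apply Rle_mult_inv_pos; nra).
  set (E := exp (- (gamma / 2) * t)).
  assert (Hexp : exp (- gamma * t) <= E) by (apply exp_le_exp_of_le; nra).
  assert (Hoff : sqrt (offdiag_energy t) <= sqrt M * E).
  { unfold E. replace (- (gamma / 2) * t) with (- gamma * t / 2) by field.
    rewrite <- sqrt_exp, <- sqrt_mult by (auto; left; apply exp_pos).
    apply sqrt_le_1_alt, HV, Ht. }
  eapply Rle_trans; [apply offdiag_energy_deriv_le; [lra | exact Hdiag]|].
  apply Rmult_le_compat_r; [apply offdiag_energy_nonneg|].
  enough (kappa * (c * exp (- gamma * t) + INR d * sqrt (offdiag_energy t))
          <= kappa * ((c + INR d * sqrt M) * E)) by lra.
  apply Rmult_le_compat_l; [lra|]. pose proof (pos_INR d).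
  assert (c * exp (- gamma * t) <= c * E) by (apply Rmult_le_compat_l; lra).
  assert (INR d * sqrt (offdiag_energy t) <= INR d * (sqrt M * E))
    by (apply Rmult_le_compat_l; lra).
  lra.
Qed.

Lemma offdiag_HSnorm_exp_decay : exists T C, 0 < T /\ 0 < C /\
  forall t, T <= t -> HSnorm d (offdiag (H t)) <= C * exp (- gamma * t).
Proof.
  destruct offdiag_energy_exp_decay as [T0 [M [HT0 [HM HV]]]].
  assert (HA : 0 <= 4 * kappa * (2 * kappa * M / gamma + INR d * sqrt M)).
  { apply Rmult_le_pos; [lra|]. apply Rplus_le_le_0_compat.
    - apply Rle_mult_inv_pos; nra.
    - apply Rmult_le_pos; [apply pos_INR | apply sqrt_pos]. }
  destruct (exp_decay_of_deriv_le offdiag_energy offdiag_energy_deriv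
      T0 (2 * gamma) _ (gamma / 2) ltac:(lra) HA) as [N [HN HVN]].
  - intros; apply offdiag_energy_nonneg.
  - intros t Ht. apply derivable_offdiag_energy. lra.
  - exact (offdiag_energy_deriv_le_exp T0 M HT0 HM HV).
  - exists T0, (sqrt N + 1). split; [lra|]. split; [pose proof (sqrt_pos N); lra|].
    intros t Ht. change (HSnorm d (offdiag (H t))) with (sqrt (offdiag_energy t)).
    eapply Rle_trans; [apply sqrt_le_1_alt, HVN, Ht|].
    rewrite sqrt_mult, sqrt_exp by (auto; left; apply exp_pos).
    replace (- (2 * gamma) * t / 2) with (- gamma * t) by field.
    pose proof (exp_pos (- gamma * t)). nra.
Qed.

End Flow.

Theorem proposition3p2
  (d : nat) (hd : (2 <= d)%nat)
  (G : Mat -> Mat) (g : nat -> nat -> R) (hG : diagonalizable d G g)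
  (H0 : Mat) (hH0 : symmetric d H0)
  (H : R -> Mat)
  (hsym : forall t, 0 <= t -> symmetric d (H t))
  (hinit : meq d (H 0) H0)
  (hode : forall t, 0 < t -> forall i j, (i < d)%nat -> (j < d)%nat ->
     derivable_pt_lim (fun s => H s i j) t (comm d (H t) (G (H t)) i j))
  (alpha : nat -> R)
  (hconv : forall i j, (i < d)%nat -> (j < d)%nat ->
     forall eps, 0 < eps -> exists T, forall t, T <= t ->
       Rabs (H t i j - (if Nat.eqb i j then alpha i else 0)) < eps)
  (gamma : R)
  (hmax_attained : exists i j, (i < j)%nat /\ (j < d)%nat /\
      g i j * (alpha i - alpha j) = - gamma)
  (hmax_bound : forall i j, (i < j)%nat -> (j < d)%nat ->
      g i j * (alpha i - alpha j) <= - gamma)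
  (hgamma : - gamma < 0) :
  exists T C, 0 < T /\ 0 < C /\ forall t, T <= t ->
    HSnorm d (offdiag (H t)) <= C * exp (- gamma * t).
(* The initial value and the attainment of the maximum defining [gamma] play no role:
   only the upper bound [hmax_bound] and the convergence [hconv] are used. *)
Proof.
  destruct (exists_abs_le_bound d g) as [kappa [Hkappa Hg]].
  exact (offdiag_HSnorm_exp_decay d G g H alpha gamma kappa hG Hg Hkappa hmax_bound
           ltac:(lra) hsym hode hconv).
Qed.
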